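(* Every strictly convex reflexive monotone ordered Banach space with a closed proper generating cone is both a $\upsilon$-quasi-lattice and a $\mu$-quasi-lattice, and its $\upsilon$- and $\mu$-quasi-suprema coincide.
   Context: An ordered Banach space is a real Banach space $X$ with a proper cone $X_+$ (closed under addition and non-negative scaling, $X_+\cap(-X_+)=\{0\}$); $x\le y$ means $y-x\in X_+$; generating means $X=X_+-X_+$; monotone means $0\le x\le y$ implies $\|x\|\le\|y\|$. Strictly convex: $\|x+y\|=\|x\|+\|y\|$ implies one of $x,y$ is a non-negative multiple of the other. For $A\subseteq X$, $\upsilon(A)$ is the set of upper bounds and $\mu(A)$ the set of minimal upper bounds ($z\in\upsilon(A)$ with $A\le w\le z\Rightarrow w=z$). Let $\sigma_{x,y}(z)=\|z-x\|+\|z-y\|$. $X$ (closed cone) is a $\upsilon$-quasi-lattice (resp. $\mu$-quasi-lattice) if for all $x,y$ the set $\upsilon(\{x,y\})$ (resp. $\mu(\{x,y\})$) is non-empty and contains a unique minimizer of $\sigma_{x,y}$ on it, the $\upsilon$- (resp. $\mu$-) quasi-supremum. *)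

From HB Require Import structures.
From mathcomp Require Import all_boot all_order all_algebra.
From mathcomp Require Import all_classical all_reals all_analysis.
Set Implicit Arguments. Unset Strict Implicit. Unset Printing Implicit Defensive.
Import Order.TTheory GRing.Theory Num.Theory.
Import numFieldNormedType.Exports.
Local Open Scope classical_set_scope.
Local Open Scope ring_scope.

Section OrderedBanach.
Variables (R : realType) (X : normedModType R).

Definition proper_cone (C : set X) : Prop :=
  [/\ C 0,
      (forall x y, C x -> C y -> C (x + y)),
      (forall (a : R) x, 0 <= a -> C x -> C (a *: x)) &
      (forall x, C x -> C (- x) -> x = 0)].

Definition cle (C : set X) (x y : X) : Prop := C (y - x).

Definition generating (C : set X) : Prop :=
  forall x : X, exists a b, C a /\ C b /\ x = a - b.

Definition monotone_norm (C : set X) : Prop :=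
  forall x y : X, cle C 0 x -> cle C x y -> `|x| <= `|y|.

Definition strictly_convex_space : Prop :=
  forall x y : X, `|x + y| = `|x| + `|y| ->
    (exists2 a : R, 0 <= a & x = a *: y) \/ (exists2 a : R, 0 <= a & y = a *: x).

Definition dual_elt (f : X -> R) : Prop :=
  (forall x y, f (x + y) = f x + f y) /\ (forall (a : R) x, f (a *: x) = a * f x)
  /\ continuous f.

Definition dual_norm (f : X -> R) : R :=
  sup [set `|f x| | x in [set x : X | `|x| <= 1]].

Definition bidual_elt (Phi : (X -> R) -> R) : Prop :=
  (forall f g, dual_elt f -> dual_elt g -> Phi (f \+ g) = Phi f + Phi g) /\
  (forall (a : R) f, dual_elt f -> Phi (fun x => a * f x) = a * Phi f) /\
  (exists M : R, forall f, dual_elt f -> `|Phi f| <= M * dual_norm f).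

Definition reflexive_space : Prop :=
  forall Phi, bidual_elt Phi -> exists x : X, forall f, dual_elt f -> Phi f = f x.

Definition ubounds (C : set X) (x y : X) : set X :=
  [set z | cle C x z /\ cle C y z].

Definition mubounds (C : set X) (x y : X) : set X :=
  [set z | ubounds C x y z /\
           forall w, cle C x w -> cle C y w -> cle C w z -> w = z].

Definition sigma (x y z : X) : R := `|z - x| + `|z - y|.

Definition sigma_min (S : set X) (x y z : X) : Prop :=
  S z /\ forall w, S w -> sigma x y z <= sigma x y w.

Definition quasi_lattice (B : X -> X -> set X) : Prop :=
  forall x y : X, B x y !=set0 /\
    exists z, sigma_min (B x y) x y z /\
              forall z', sigma_min (B x y) x y z' -> z' = z.

Definition upsilon_quasi_lattice (C : set X) := quasi_lattice (ubounds C).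
Definition mu_quasi_lattice (C : set X) := quasi_lattice (mubounds C).

End OrderedBanach.

(* The quasi-supremum is found by the direct method. A minimising sequence of
   sigma_{x,y} over the upper bounds of {x, y} is bounded; by reflexivity it
   has a weak limit along a free ultrafilter. That limit is again an upper
   bound, since a closed cone is the intersection of the closed half-spaces
   containing it (Hahn-Banach), and it is a minimiser, since sigma_{x,y} is
   weakly lower semicontinuous (norms are attained by norming functionals).
   By strict convexity the minimiser is unique, and by monotonicity of the
   norm every upper bound below it is again a minimiser, hence equal to it:
   the minimiser is a minimal upper bound, so it also minimises sigma_{x,y}
   over the minimal upper bounds, and uniquely so. *)

From HB Require Import structures.
From mathcomp Require Import all_boot all_order all_algebra.
From mathcomp Require Import all_classical all_reals all_analysis.
From mathcomp Require Import lra ring.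
Import Order.TTheory GRing.Theory Num.Theory.
Import numFieldNormedType.Exports.
Local Open Scope classical_set_scope.
Local Open Scope ring_scope.

Set Implicit Arguments. Unset Strict Implicit.

Section HahnBanach.
Variables (R : realType) (X : lmodType R) (p : X -> R).
Hypothesis pD : forall a b, p (a + b) <= p a + p b.
Hypothesis pZ : forall (t : R) a, 0 < t -> p (t *: a) <= t * p a.

Lemma sublinear0 : p 0 = 0.
Proof.
have := pD 0 0; have := @pZ 2^-1 0; rewrite addr0 scaler0 invr_gt0 ltr0n => /(_ isT).
lra.
Qed.

Lemma sublinearZ (t : R) a : 0 < t -> p (t *: a) = t * p a.
Proof.
move=> t0; apply/eqP; rewrite eq_le pZ //=.
have := @pZ t^-1 (t *: a); rewrite scalerA mulVf ?gt_eqF // scale1r.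
by rewrite invr_gt0 -(ler_pM2l t0) mulrA mulfV ?gt_eqF // mul1r => ->.
Qed.

Lemma sublinearN a : - p a <= p (- a).
Proof. by have := pD a (- a); rewrite subrr sublinear0; lra. Qed.

Variable v0 : X.

(* Partial linear functionals are handled through their graphs, which makes
   Zorn's lemma applicable to plain sets of [X * R]. *)
Definition dominated_graph (G : set (X * R)) :=
  [/\ G (v0, p v0),
   (forall a r b s, G (a, r) -> G (b, s) -> G (a + b, r + s)),
   (forall t a r, G (a, r) -> G (t *: a, t * r)) &
   (forall a r, G (a, r) -> r <= p a)].

Lemma dominated_graph_functional G a r s :
  dominated_graph G -> G (a, r) -> G (a, s) -> r = s.
Proof.
move=> [_ GD GZ Gp] Gar Gas.
have := Gp _ _ (GD _ _ _ _ Gar (GZ (-1) _ _ Gas)).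
have := Gp _ _ (GD _ _ _ _ Gas (GZ (-1) _ _ Gar)).
rewrite scaleN1r subrr sublinear0; lra.
Qed.

Lemma dominated_graph_line : dominated_graph [set (t *: v0, t * p v0) | t in setT].
Proof.
split.
- by exists 1; rewrite ?scale1r ?mul1r.
- move=> a r b s [t1 _ [<- <-]] [t2 _ [<- <-]].
  by exists (t1 + t2); rewrite ?scalerDl ?mulrDl.
- move=> t a r [t1 _ [<- <-]].
  by exists (t * t1); rewrite ?scalerA ?mulrA.
- move=> a r [t _ [<- <-]].
  have [t0|t0|->] := ltgtP t 0; last by rewrite scale0r mul0r sublinear0.
  + have tN : 0 < - t by rewrite oppr_gt0.
    rewrite -[t *: v0]opprK -scaleNr -scalerN sublinearZ //.
    have := sublinearN v0; rewrite -(ler_pM2l tN); lra.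
  + by rewrite sublinearZ.
Qed.

Definition graph_adjoin (G : set (X * R)) (w : X) (c : R) : set (X * R) :=
  [set q | exists d r t, G (d, r) /\ q = (d + t *: w, r + t * c)].

Lemma graph_adjoin_dominated G w c : dominated_graph G ->
  (forall d r, G (d, r) -> r - p (d - w) <= c /\ c <= p (d + w) - r) ->
  dominated_graph (graph_adjoin G w c).
Proof.
move=> [G0 GD GZ Gp] cP; split.
- by exists v0, (p v0), 0; rewrite scale0r mul0r !addr0.
- move=> a r b s [d1 [r1 [t1 [G1 [-> ->]]]]] [d2 [r2 [t2 [G2 [-> ->]]]]].
  exists (d1 + d2), (r1 + r2), (t1 + t2); split; first exact: GD.
  by congr pair; rewrite ?scalerDl ?mulrDl addrACA.
- move=> t a r [d1 [r1 [t1 [G1 [-> ->]]]]].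
  exists (t *: d1), (t * r1), (t * t1); split; first exact: GZ.
  by congr pair; rewrite ?scalerDr ?scalerA ?mulrDr ?mulrA.
- move=> a r [d [r0 [t [Gd [-> ->]]]]].
  have [t0|t0|->] := ltgtP t 0; last by rewrite scale0r mul0r !addr0; exact: Gp.
  + have tN : 0 < - t by rewrite oppr_gt0.
    have [+ _] := cP _ _ (GZ (- t)^-1 _ _ Gd).
    rewrite -(ler_pM2l tN) mulrBr mulrA mulfV ?gt_eqF // mul1r.
    rewrite -sublinearZ // scalerBr scalerA mulfV ?gt_eqF // scale1r.
    rewrite scaleNr opprK; lra.
  + have [_] := cP _ _ (GZ t^-1 _ _ Gd).
    rewrite -(ler_pM2l t0) mulrBr mulrA mulfV ?gt_eqF // mul1r.
    rewrite -sublinearZ ?invr_gt0 // scalerDr scalerA mulfV ?gt_eqF // scale1r.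
    lra.
Qed.

(* The classical one-dimensional step: every lower bound [r - p (d - w)] is
   below every upper bound [p (d' + w) - r'] by sublinearity, so the supremum
   of the former is an admissible value at [w]. *)
Lemma graph_adjoin_constant G w : dominated_graph G ->
  exists c, forall d r, G (d, r) -> r - p (d - w) <= c /\ c <= p (d + w) - r.
Proof.
move=> [G0 GD _ Gp].
pose S := [set y | exists d r, G (d, r) /\ y = r - p (d - w)].
have S_le d r : G (d, r) -> ubound S (p (d + w) - r).
  move=> Gdr _ [d' [r' [Gdr' ->]]].
  have := Gp _ _ (GD _ _ _ _ Gdr Gdr').
  have := pD (d' - w) (d + w).
  rewrite addrACA addNr addr0 [d' + d]addrC; lra.
have S_ub : has_ubound S by exists (p (v0 + w) - p v0); exact: S_le.
exists (sup S) => d r Gdr; split.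
- by apply: ub_le_sup S_ub _ _; exists d, r.
- by apply: ge_sup (S_le _ _ Gdr); exists (p v0 - p (v0 - w)), v0, (p v0).
Qed.

Lemma dominated_graph_extend G w :
  dominated_graph G -> (forall r, ~ G (w, r)) ->
  exists2 G', dominated_graph G' & G `<` G'.
Proof.
move=> gG Gw; have [c cP] := graph_adjoin_constant w gG.
exists (graph_adjoin G w c); first exact: graph_adjoin_dominated.
split=> [[d r] Gdr|sub]; first by exists d, r, 0; rewrite scale0r mul0r !addr0.
have [G0 _ GZ _] := gG; have := GZ 0 _ _ G0; rewrite scale0r mul0r => G00.
by apply: (Gw c); apply: sub; exists 0, 0, 1; rewrite scale1r mul1r !add0r.
Qed.

Lemma hahn_banach : exists f : X -> R,
  [/\ (forall a b, f (a + b) = f a + f b),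
      (forall (t : R) a, f (t *: a) = t * f a),
      (forall a, f a <= p a) & f v0 = p v0].
Proof.
pose P G := G = set0 \/ dominated_graph G.
have chain_dominated F G q : F `<=` P -> F G -> G q -> dominated_graph G.
  by move=> FP FG Gq; case: (FP G FG) => // G0; rewrite G0 in Gq.
have [A [PA Amax]] : exists A, P A /\ forall B, A `<` B -> ~ P B.
  apply: Zorn_bigcup => F FP Ftot.
  have [[q [G FG Gq]]|Fempty] := pselect ((\bigcup_(G in F) G) !=set0); last first.
    by left; apply/seteqP; split=> // q Uq; apply: Fempty; exists q.
  right; split.
  - by exists G => //; have [] := chain_dominated F G q FP FG Gq.
  - move=> a r b s [G1 F1 G1a] [G2 F2 G2b].
    have [_ D1 _ _] := chain_dominated _ _ _ FP F1 G1a.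
    have [_ D2 _ _] := chain_dominated _ _ _ FP F2 G2b.
    have [sub|sub] := Ftot _ _ F1 F2.
      by exists G2 => //; apply: D2 => //; exact: sub.
    by exists G1 => //; apply: D1 => //; exact: sub.
  - move=> t a r [G1 F1 G1a]; exists G1 => //.
    by have [_ _ Z _] := chain_dominated _ _ _ FP F1 G1a; exact: Z.
  - move=> a r [G1 F1 G1a].
    by have [_ _ _ Gp] := chain_dominated _ _ _ FP F1 G1a; exact: Gp.
have gA : dominated_graph A.
  case: PA => // A0; exfalso; apply: (Amax _ _ (or_intror dominated_graph_line)).
  rewrite A0; split=> // /(_ (v0, p v0)); apply.
  by exists 1; rewrite ?scale1r ?mul1r.
have Atotal w : exists r, A (w, r).
  apply: contrapT => Aw.
  have [G' gG' AG'] := dominated_graph_extend gA (fun r Ar => Aw (ex_intro _ r Ar)).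
  by apply: Amax AG' _; right.
have [f Af] := choice Atotal; have [A0 AD AZ Ap] := gA.
exists f; split.
- by move=> a b; apply: (dominated_graph_functional gA (Af (a + b))); exact: AD.
- by move=> t a; apply: (dominated_graph_functional gA (Af (t *: a))); exact: AZ.
- by move=> a; exact: Ap.
- exact: (dominated_graph_functional gA (Af v0)).
Qed.

End HahnBanach.

Section DualSpace.
Variables (R : realType) (X : normedModType R).
Implicit Types (f g : X -> R) (a b v : X).

Lemma additive_norm_bounded_continuous f :
  (forall a b, f (a + b) = f a + f b) -> (forall a, `|f a| <= `|a|) ->
  continuous f.
Proof.
move=> fD fle x; apply/cvgrPdist_lt => e e0; near=> y.
have -> : f x - f y = f (x - y) by apply/eqP; rewrite subr_eq -fD subrK.
by apply: le_lt_trans (fle _) _; near: y; apply/nbhs_normP; exists e.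
Unshelve. all: by end_near. Qed.

Lemma hahn_banach_normed (p : X -> R) v :
  (forall a b, p (a + b) <= p a + p b) ->
  (forall (t : R) a, 0 < t -> p (t *: a) <= t * p a) ->
  (forall a, p a <= `|a|) ->
  exists f, [/\ dual_elt f, (forall a, f a <= p a) & f v = p v].
Proof.
move=> pD pZ ple; have [f [fD fZ fp fv]] := hahn_banach pD pZ v.
exists f; split=> //; split=> //; split=> //.
apply: additive_norm_bounded_continuous => // a; rewrite ler_norml.
have := fp (- a); have := ple (- a); have := fp a; have := ple a.
by rewrite -scaleN1r fZ normrZ normrN1 mul1r; lra.
Qed.

Lemma norming_functional v :
  exists f, [/\ dual_elt f, (forall a, f a <= `|a|) & f v = `|v|].
Proof.
apply: hahn_banach_normed => //; first exact: ler_normD.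
by move=> t a t0; rewrite normrZ gtr0_norm.
Qed.

Lemma dual_eltB f a b : dual_elt f -> f (a - b) = f a - f b.
Proof. by move=> [fD [fZ _]]; rewrite fD -scaleN1r fZ mulN1r. Qed.

Lemma dual_elt0 f : dual_elt f -> f 0 = 0.
Proof. by move=> df; rewrite -(subrr 0) dual_eltB // subrr. Qed.

Lemma dual_eltD f g : dual_elt f -> dual_elt g -> dual_elt (f \+ g).
Proof.
move=> [fD [fZ fc]] [gD [gZ gc]]; split; [|split].
- by move=> a b /=; rewrite fD gD addrACA.
- by move=> t a /=; rewrite fZ gZ mulrDr.
- by move=> a; apply: continuousD; [exact: fc | exact: gc].
Qed.

(* Boundedness on the unit ball is read off continuity at [0]. *)
Lemma dual_norm_has_ubound f : dual_elt f ->
  has_ubound [set `|f x| | x in [set x : X | `|x| <= 1]].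
Proof.
move=> df; have [_ [fZ fc]] := df.
have : f @ (0 : X) --> f 0 := fc 0; rewrite (dual_elt0 df).
move=> /cvgrPdist_lt /(_ 1 ltr01) /nbhs_normP [d /= d0 hd].
have d2 : 0 < d / 2 by rewrite divr_gt0.
exists (2 / d) => _ [x /= x1 <-].
have hx : `|0 - (d / 2) *: x| < d.
  rewrite sub0r normrN normrZ gtr0_norm //.
  apply: le_lt_trans (_ : d / 2 * 1 < d); first by rewrite ler_pM2l.
  by rewrite mulr1 ltr_pdivrMr // ltr_pMr // ltr1n.
have := hd _ hx; rewrite /= sub0r normrN fZ normrM gtr0_norm // => h.
rewrite -(ler_pM2l d2) (_ : d / 2 * (2 / d) = 1) ?ltW //.
by field; rewrite gt_eqF.
Qed.

Lemma dual_norm_ge0 f : dual_elt f -> 0 <= dual_norm f.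
Proof.
move=> df; apply: le_trans (normr_ge0 (f 0)) _.
by apply: ub_le_sup; [exact: dual_norm_has_ubound | exists 0 => //=; rewrite normr0].
Qed.

Lemma dual_elt_le f v : dual_elt f -> `|f v| <= dual_norm f * `|v|.
Proof.
move=> df; have [_ [fZ _]] := df.
have [->|v0] := eqVneq v 0; first by rewrite (dual_elt0 df) !normr0 mulr0.
have nv : 0 < `|v| by rewrite normr_gt0.
have nu : `| `|v|^-1 *: v| = 1.
  by rewrite normrZ normrV ?unitfE ?gt_eqF // normr_id mulVf ?gt_eqF.
rewrite -[v in f v](scalerKV (lt0r_neq0 nv)) fZ normrM normr_id mulrC ler_pM2r //.
by apply: ub_le_sup; [exact: dual_norm_has_ubound | exists (`|v|^-1 *: v) => //=; rewrite nu].
Qed.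

End DualSpace.

Section ClosedCone.
Variables (R : realType) (X : normedModType R) (C : set X).
Hypothesis C0 : C 0.
Hypothesis CD : forall a b, C a -> C b -> C (a + b).
Hypothesis CZ : forall (t : R) a, 0 <= t -> C a -> C (t *: a).
Hypothesis closedC : closed C.

Definition cone_dist (v : X) := inf [set `|v - c| | c in C].

Let cone_dist_set0 v : [set `|v - c| | c in C] !=set0.
Proof. by exists `|v - 0|, 0. Qed.

Let cone_dist_lbound v : has_lbound [set `|v - c| | c in C].
Proof. by exists 0 => _ [c _ <-]. Qed.

Lemma cone_dist_le v c : C c -> cone_dist v <= `|v - c|.
Proof. by move=> Cc; apply: ge_inf (cone_dist_lbound v) _ _; exists c. Qed.

Lemma cone_dist_ge0 v : 0 <= cone_dist v.
Proof. by apply: lb_le_inf (cone_dist_set0 v) _ => _ [c _ <-]. Qed.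

Lemma cone_dist_norm v : cone_dist v <= `|v|.
Proof. by have := cone_dist_le v C0; rewrite subr0. Qed.

Lemma cone_dist_cone c : C c -> cone_dist c = 0.
Proof.
move=> Cc; apply/eqP; rewrite eq_le cone_dist_ge0 andbT.
by have := cone_dist_le c Cc; rewrite subrr normr0.
Qed.

Lemma cone_distD a b : cone_dist (a + b) <= cone_dist a + cone_dist b.
Proof.
rewrite -lerBlDr; apply: lb_le_inf (cone_dist_set0 a) _ => _ [c1 C1 <-].
rewrite lerBlDr -lerBlDl.
apply: lb_le_inf (cone_dist_set0 b) _ => _ [c2 C2 <-]; rewrite lerBlDr.
apply: le_trans (cone_dist_le (a + b) (CD C1 C2)) _.
by rewrite opprD addrACA addrC ler_normD.
Qed.

Lemma cone_distZ (t : R) a : 0 < t -> cone_dist (t *: a) <= t * cone_dist a.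
Proof.
move=> t0; rewrite mulrC -ler_pdivrMr //.
apply: lb_le_inf (cone_dist_set0 a) _ => _ [c Cc <-]; rewrite ler_pdivrMr // mulrC.
have := cone_dist_le (t *: a) (CZ (ltW t0) Cc).
by rewrite -scalerBr normrZ gtr0_norm.
Qed.

Lemma cone_dist_gt0 v : ~ C v -> 0 < cone_dist v.
Proof.
move=> nCv; rewrite lt_neqAle cone_dist_ge0 andbT; apply/negP => /eqP d0.
apply: nCv; apply: closedC => B /nbhs_normP [e /= e0 eB].
have [_ [c Cc <-] ce] := inf_adherent e0 (conj (cone_dist_set0 v) (cone_dist_lbound v)).
by exists c; split=> //; apply: eB; rewrite /= -[e]add0r d0.
Qed.

Lemma cone_separation v : ~ C v ->
  exists f, [/\ dual_elt f, (forall c, C c -> f c <= 0) & 0 < f v].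
Proof.
move=> nCv.
have [f [df fle fv]] := hahn_banach_normed v cone_distD cone_distZ cone_dist_norm.
exists f; split=> //; last by rewrite fv cone_dist_gt0.
by move=> c Cc; have := fle c; rewrite cone_dist_cone.
Qed.

Lemma dual_cone_mem v :
  (forall f, dual_elt f -> (forall c, C c -> f c <= 0) -> f v <= 0) -> C v.
Proof.
move=> vdual; apply: contrapT => nCv.
have [f [df fC fv]] := cone_separation nCv.
by have := vdual f df fC; rewrite leNgt fv.
Qed.

End ClosedCone.

Lemma ultra_bounded_cvg (R : realType) (G : set_system nat) (u : nat -> R) (b : R) :
  UltraFilter G -> (forall n, `|u n| <= b) -> exists l : R, u @ G --> l.
Proof.
move=> UG ub.
have Gb : (u @ G) `[- b, b]%classic.
  by rewrite /fmap /=; apply: filterE => n /=; rewrite in_itv /= -ler_norml ub.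
have [l [_ cl]] := segment_compact _ Gb.
exists l => V Vl; have [//|GnV] := in_ultra_setVsetC (u @^-1` V) UG.
by have [q [nVq Vq]] := cl (~` V) V GnV Vl.
Qed.

Section WeakUltralimit.
Variables (R : realType) (X : normedModType R) (G : set_system nat).
Hypothesis UG : UltraFilter G.
Implicit Types (u : nat -> X) (x y z : X).

Definition weak_ultralimit u z :=
  forall f, dual_elt f -> (fun n => f (u n)) @ G --> f z.

(* Reflexivity realises the functional [f |-> lim_G f (u n)] of the bidual. *)
Lemma reflexive_weak_ultralimit u (b : R) :
  reflexive_space X -> (forall n, `|u n| <= b) -> exists z, weak_ultralimit u z.
Proof.
move=> reflX ub.
have fu_le f : dual_elt f -> forall n, `|f (u n)| <= dual_norm f * b.
  move=> df n; apply: le_trans (dual_elt_le (u n) df) _.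
  by rewrite ler_wpM2l ?dual_norm_ge0.
pose Phi (f : X -> R) := lim ((fun n => f (u n)) @ G).
have PhiP f : dual_elt f -> (fun n => f (u n)) @ G --> Phi f.
  by move=> df; have [l fl] := ultra_bounded_cvg UG (fu_le f df); rewrite /Phi (cvg_lim _ fl).
have [|z Phiz] := reflX Phi; last by exists z => f df; rewrite -Phiz //; exact: PhiP.
split; [|split].
- by move=> f g df dg; apply: cvg_lim => //; exact: cvgD (PhiP f df) (PhiP g dg).
- by move=> a f df; apply: cvg_lim => //; apply: cvgMl_tmp; exact: PhiP.
- exists b => f df; rewrite ler_norml mulrC; apply/andP; split.
  + apply: cvgr_to_ge (PhiP f df) _; apply: filterE => n /=.
    by have := fu_le f df n; rewrite ler_norml => /andP[].
  + apply: cvgr_to_le (PhiP f df) _; apply: filterE => n /=.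
    by have := fu_le f df n; rewrite ler_norml => /andP[].
Qed.

Lemma cone_weak_ultralimit (C : set X) u x z :
  C 0 -> (forall a b, C a -> C b -> C (a + b)) ->
  (forall (t : R) a, 0 <= t -> C a -> C (t *: a)) -> closed C ->
  weak_ultralimit u z -> (forall n, C (u n - x)) -> C (z - x).
Proof.
move=> C0 CD CZ closedC uz uC; apply: dual_cone_mem => // f df fC.
rewrite dual_eltB // subr_le0; apply: cvgr_to_le (uz f df) _; apply: filterE => n /=.
by have := fC _ (uC n); rewrite dual_eltB // subr_le0.
Qed.

(* Weak lower semicontinuity of [sigma], via norming functionals at [z]. *)
Lemma sigma_weak_ultralimit_le u x y z (t : R) :
  weak_ultralimit u z -> (\forall n \near G, sigma x y (u n) <= t) ->
  sigma x y z <= t.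
Proof.
move=> uz ut.
have [f1 [df1 f1le f1z]] := norming_functional (z - x).
have [f2 [df2 f2le f2z]] := norming_functional (z - y).
have : f1 z + f2 z <= t + f1 x + f2 y.
  apply: (cvgr_to_le (f := fun n => f1 (u n) + f2 (u n))) (uz _ (dual_eltD df1 df2)) _.
  apply: filterS ut => n /=.
  have := f1le (u n - x); have := f2le (u n - y).
  by rewrite /sigma !(dual_eltB _ _ df1) !(dual_eltB _ _ df2); lra.
by rewrite /sigma -f1z -f2z !(dual_eltB _ _ df1) !(dual_eltB _ _ df2); lra.
Qed.

End WeakUltralimit.

Lemma ubounds_nonempty (R : realType) (X : normedModType R) (C : set X) x y :
  generating C -> ubounds C x y !=set0.
Proof.
move=> genC; have [a [b [Ca [Cb xy]]]] := genC (x - y).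
by exists (x + b); split; rewrite /cle addrAC ?subrr ?add0r // xy subrK.
Qed.

Section Existence.
Variables (R : realType) (X : normedModType R) (C : set X).
Hypothesis C0 : C 0.
Hypothesis CD : forall a b, C a -> C b -> C (a + b).
Hypothesis CZ : forall (t : R) a, 0 <= t -> C a -> C (t *: a).
Hypothesis closedC : closed C.
Hypothesis genC : generating C.
Hypothesis reflX : reflexive_space X.

Lemma exists_sigma_min_ubounds x y : exists z, sigma_min (ubounds C x y) x y z.
Proof.
pose U := ubounds C x y; pose S := sigma x y @` U.
have [w0 Uw0] := ubounds_nonempty x y genC.
have S0 : S !=set0 by exists (sigma x y w0), w0.
have S_lb : has_lbound S by exists 0 => _ [w _ <-]; rewrite addr_ge0.
have s_le w : U w -> inf S <= sigma x y w by move=> Uw; apply: ge_inf S_lb _ _; exists w.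
have /choice[u uP] : forall n, exists w, U w /\ sigma x y w < inf S + n.+1%:R^-1.
  move=> n; have n0 : 0 < n.+1%:R^-1 :> R by rewrite invr_gt0.
  have [_ [w Uw <-] ws] := inf_adherent n0 (conj S0 S_lb).
  by exists w.
have u_le n : `|u n| <= inf S + 1 + `|x|.
  have [_ un] := uP n; have n1 : n.+1%:R^-1 <= 1 :> R by rewrite invf_le1 // ler1n.
  have := ler_normD (u n - x) x; have := normr_ge0 (u n - y).
  move: un n1; rewrite /sigma subrK; generalize (n.+1%:R^-1 : R) => e; lra.
have [G [UG ooG]] := ultraFilterLemma (F := \oo) _.
have [z uz] := reflexive_weak_ultralimit UG reflX u_le.
exists z; split.
  by split; apply: cone_weak_ultralimit uz _ => // n; have [[]] := uP n.
move=> w Uw; apply: le_trans (s_le w Uw); apply/ler_addgt0Pr => e e0.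
apply: sigma_weak_ultralimit_le uz _; apply: ooG.
apply: filterS (near_infty_natSinv_lt (PosNum e0)) => n /= ne.
have [_ /ltW un] := uP n; apply: le_trans un _; rewrite lerD2l; exact: ltW.
Qed.

End Existence.

Lemma midpoint_subr (R : realType) (X : lmodType R) (a b x : X) :
  2^-1 *: (a + b) - x = 2^-1 *: ((a - x) + (b - x)).
Proof.
rewrite addrACA -opprD scalerBr; congr (_ - _).
by rewrite -mulr2n -[x *+ 2]scaler_nat scalerA mulVf ?pnatr_eq0 // scale1r.
Qed.

Section QuasiSupremum.
Variables (R : realType) (X : normedModType R) (C : set X).
Hypothesis pC : proper_cone C.
Hypothesis sconvX : strictly_convex_space X.

(* Equality in the triangle inequality makes [a] and [b] lie on one ray of
   the cone, ordered by their norms. *)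
Lemma cone_subr_of_norm_le a b :
  C a -> C b -> `|a + b| = `|a| + `|b| -> `|a| <= `|b| -> C (b - a).
Proof.
have [C0 _ CZ _] := pC.
move=> Ca Cb /sconvX [[t t0 ->]|[t t0 ->]] ab.
- have [->|b0] := eqVneq b 0; first by rewrite scaler0 subrr.
  rewrite -{1}[b]scale1r -scalerBl; apply: CZ Cb; rewrite subr_ge0.
  by move: ab; rewrite normrZ ger0_norm // -{2}[`|b|]mul1r ler_pM2r ?normr_gt0.
- have [a0|a0] := eqVneq a 0; first by rewrite a0 scaler0 subrr.
  rewrite -{2}[a]scale1r -scalerBl; apply: CZ Ca; rewrite subr_ge0.
  by move: ab; rewrite normrZ ger0_norm // -{1}[`|a|]mul1r ler_pM2r ?normr_gt0.
Qed.

(* For two minimisers the midpoint is a minimiser too, which forces equality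
   in both triangle inequalities; then [z1 - z2] and [z2 - z1] are in the cone. *)
Lemma sigma_min_ubounds_unique x y z1 z2 :
  sigma_min (ubounds C x y) x y z1 -> sigma_min (ubounds C x y) x y z2 -> z1 = z2.
Proof.
have [_ CD CZ Canti] := pC.
wlog le12 : z1 z2 / `|z1 - x| <= `|z2 - x|.
  move=> wlog_le z1min z2min; have [le|/ltW le] := leP `|z1 - x| `|z2 - x|.
    exact: wlog_le.
  exact/esym/wlog_le.
move=> [[z1x z1y] z1min] [[z2x z2y] z2min]; rewrite /cle in z1x z1y z2x z2y.
have h2 : 0 <= 2^-1 :> R by rewrite invr_ge0.
have Umid : ubounds C x y (2^-1 *: (z1 + z2)).
  by split; rewrite /cle midpoint_subr; apply: CZ => //; apply: CD.
have := z1min _ Umid; have := z1min _ (conj z2x z2y); have := z2min _ (conj z1x z1y).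
rewrite /sigma !midpoint_subr !normrZ ger0_norm //.
have := ler_normD (z1 - x) (z2 - x); have := ler_normD (z1 - y) (z2 - y).
move=> ley lex e21 e12 emid.
have ex : `|z1 - x + (z2 - x)| = `|z1 - x| + `|z2 - x| by lra.
have ey : `|z2 - y + (z1 - y)| = `|z2 - y| + `|z1 - y|.
  by rewrite [_ + (z1 - y)]addrC; lra.
have le21 : `|z2 - y| <= `|z1 - y| by lra.
have := cone_subr_of_norm_le z1x z2x ex le12.
have := cone_subr_of_norm_le z2y z1y ey le21.
rewrite !opprB !addrA !subrK => C12 C21.
by apply/eqP; rewrite -subr_eq0 (Canti _ C12) // opprB.
Qed.

Hypothesis monoC : monotone_norm C.

(* An upper bound [w] below the minimiser [z] is no farther from [x] and [y]. *)
Lemma sigma_min_ubounds_mubounds x y z :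
  sigma_min (ubounds C x y) x y z -> mubounds C x y z.
Proof.
move=> zmin; split=> [|w xw yw wz]; first by case: zmin.
apply: (sigma_min_ubounds_unique _ zmin); split=> [//|v Uv].
apply: le_trans (zmin.2 v Uv); apply: lerD; apply: monoC;
  by rewrite /cle ?subr0 // opprB addrA subrK.
Qed.

Lemma sigma_min_mubounds x y z :
  sigma_min (ubounds C x y) x y z -> sigma_min (mubounds C x y) x y z.
Proof.
move=> zmin; split; first exact: sigma_min_ubounds_mubounds.
by move=> w [Uw _]; exact: zmin.2.
Qed.

Lemma sigma_min_mubounds_ubounds x y z z' :
  sigma_min (ubounds C x y) x y z -> sigma_min (mubounds C x y) x y z' ->
  sigma_min (ubounds C x y) x y z'.
Proof.
move=> zmin [[Uz' _] z'min]; split=> // v Uv.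
exact: le_trans (z'min z (sigma_min_ubounds_mubounds zmin)) (zmin.2 v Uv).
Qed.

End QuasiSupremum.

Theorem corollary6p2 (R : realType) (X : completeNormedModType R) (C : set X) :
  proper_cone C -> closed C -> generating C -> monotone_norm C ->
  strictly_convex_space X -> reflexive_space X ->
  [/\ upsilon_quasi_lattice C, mu_quasi_lattice C &
      forall (x y zu zm : X),
        sigma_min (ubounds C x y) x y zu ->
        sigma_min (mubounds C x y) x y zm -> zu = zm].
Proof.
move=> pC closedC genC monoC sconvX reflX; have [C0 CD CZ _] := pC.
have exists_min := exists_sigma_min_ubounds C0 CD CZ closedC genC reflX.
have uniq_min x y z z' : sigma_min (ubounds C x y) x y z ->
    sigma_min (mubounds C x y) x y z' -> z = z'.
  move=> zmin z'min; apply: (sigma_min_ubounds_unique pC sconvX zmin).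
  exact: (sigma_min_mubounds_ubounds pC sconvX monoC zmin z'min).
split=> [x y|x y|]; last exact: uniq_min.
- have [z zmin] := exists_min x y; split; first by exists z; case: zmin.
  by exists z; split=> // z' z'min; exact: (sigma_min_ubounds_unique pC sconvX z'min zmin).
- have [z zmin] := exists_min x y.
  have zminM := sigma_min_mubounds pC sconvX monoC zmin.
  split; first by exists z; case: zminM.
  by exists z; split=> // z' /(uniq_min _ _ _ _ zmin) ->.
Qed.
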